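(* Almost surely under the annealed law $\mathbb{P}$, $$\frac1t\,[Y]_t\longrightarrow \eta^2\qquad(t\to\infty),$$ where $([Y]_t)_{ij}=\sum_{0\le r<t}(Y^i_{r+1}-Y^i_r)(Y^j_{r+1}-Y^j_r)$ and $(\eta^2)_{ij}=\sum_{u\in\mathbb{Z}^n}(u_i-b_i)(u_j-b_j)\bar P(u)$.
   Context: Let $\mathbb{S}$ be a finite set and $\pi$ a probability measure on $\mathbb{S}$. The environment $\xi=\{\xi_t(x): x\in\mathbb{Z}^n, t\in\mathbb{Z}^+\}$ consists of i.i.d. $\mathbb{S}$-valued random variables with law $\pi$; $\Pi$ denotes its law. Let $P_0$ be a probability distribution on $\mathbb{Z}^n$ and $c:\mathbb{Z}^n\times\mathbb{S}\to\mathbb{R}$ such that: $0\le P_0(u)+c(u,s)\le 1$ for all $u,s$; $\sum_{u}c(u,s)=0$ for all $s$; $\sum_{s}c(u,s)\pi(s)=0$ for all $u$; $P_0$ and $c$ have bounded range; and there is $b^c\in\mathbb{R}^n$ with $\sum_u u\,c(u,s)=b^c$ for all $s$. Given $\xi$, $(X_t)$ is the Markov chain on $\mathbb{Z}^n$ (from a fixed starting point) with $\mathbb{P}(X_{t+1}=y\mid X_t=x,\xi)=P_0(y-x)+c(y-x,\xi_t(x))$; $\mathbb{P}_\xi$ denotes this quenched law and $\mathbb{P}=\int\mathbb{P}_\xi\,\Pi(d\xi)$ the annealed (joint) law. Let $\bar P(u)=P_0(u)+\sum_s\pi(s)c(u,s)$, $b^0=\sum_u uP_0(u)$, $b=b^0+b^c$,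 $Y_t=X_t-tb$. *)

From HB Require Import structures.
From mathcomp Require Import all_boot all_order all_algebra.
From mathcomp Require Import all_classical all_reals all_analysis.
Set Implicit Arguments. Unset Strict Implicit. Unset Printing Implicit Defensive.
Import Order.TTheory GRing.Theory Num.Theory.
Import numFieldNormedType.Exports.
Local Open Scope classical_set_scope.
Local Open Scope ring_scope.

Definition zcoord (n : nat) (u : 'rV[int]_n) (i : 'I_n) : int := u ord0 i.

(* Sum over all of Z^n of a finitely supported function (finite-support sum
   from fsbigop). *)
Definition sumZ (R : realType) (n : nat) (f : 'rV[int]_n -> R) : R :=
  \sum_(u \in [set: 'rV[int]_n]) f u.

Definition Pbar (R : realType) (S : finType) (n : nat) (pi : S -> R)
  (P0 : 'rV[int]_n -> R) (c : 'rV[int]_n -> S -> R) (u : 'rV[int]_n) : R :=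
  P0 u + \sum_(s : S) pi s * c u s.

Definition b0 (R : realType) (n : nat) (P0 : 'rV[int]_n -> R) (i : 'I_n) : R :=
  sumZ (fun u => (zcoord u i)%:~R * P0 u).

Definition eta2 (R : realType) (S : finType) (n : nat) (pi : S -> R)
  (P0 : 'rV[int]_n -> R) (c : 'rV[int]_n -> S -> R) (b : 'I_n -> R)
  (i j : 'I_n) : R :=
  sumZ (fun u => ((zcoord u i)%:~R - b i) * ((zcoord u j)%:~R - b j) * Pbar pi P0 c u).

Definition Ypath (R : realType) (n : nat) (x : nat -> 'rV[int]_n) (b : 'I_n -> R)
  (t : nat) (i : 'I_n) : R :=
  (zcoord (x t) i)%:~R - t%:R * b i.

Definition QV (R : realType) (n : nat) (x : nat -> 'rV[int]_n) (b : 'I_n -> R)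
  (t : nat) (i j : 'I_n) : R :=
  \sum_(r < t) ((Ypath x b r.+1 i - Ypath x b r i) * (Ypath x b r.+1 j - Ypath x b r j)).

(* The annealed (joint) law of the environment xi and the walk X:
   the environment values xi_t(x) are i.i.d. with law pi, and given xi the walk
   starts at x0 and moves from x at time r to y with probability
   P0(y-x) + c(y-x, xi_r(x)).  This is expressed through cylinder events: for
   every finite set B of space-time points, every configuration sigma on B and
   every path x_0..x_t whose space-time points (r, x_r), r < t, lie in B,
   P(xi = sigma on B, X_0 = x_0, ..., X_t = x_t)
     = [x_0 = x0] * prod_{p in B} pi(sigma p)
       * prod_{r<t} (P0(x_{r+1}-x_r) + c(x_{r+1}-x_r, sigma(r,x_r))).
   These cylinder events form a generating pi-system, so this determines the
   joint law. *)
Definition annealed_law (d : measure_display) (Omega : measurableType d)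
  (R : realType) (P : probability Omega R) (S : finType) (n : nat)
  (pi : S -> R) (P0 : 'rV[int]_n -> R) (c : 'rV[int]_n -> S -> R)
  (x0 : 'rV[int]_n)
  (xi : nat -> 'rV[int]_n -> Omega -> S) (X : nat -> Omega -> 'rV[int]_n) : Prop :=
  forall (B : seq (nat * 'rV[int]_n)) (sigma : nat * 'rV[int]_n -> S)
         (x : nat -> 'rV[int]_n) (t : nat),
    (forall r, (r < t)%N -> (r, x r) \in B) ->
    let E := [set w | (forall p, p \in B -> xi p.1 p.2 w = sigma p) /\
                      (forall r, (r <= t)%N -> X r w = x r)] in
    measurable E /\
    P E = ((x 0%N == x0)%:R * (\prod_(p <- undup B) pi (sigma p)) *
           \prod_(r < t) (P0 (x r.+1 - x r) + c (x r.+1 - x r) (sigma (r : nat, x r))))%:E.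

(* Under the annealed law the environment read by the walk is fresh at every
   step: the space-time points (r, X_r) have distinct times, so averaging over
   the environment makes the increments of X i.i.d. with law \bar P, which is
   P_0 because c averages to 0 in s.  The entries of [Y]_t are sums of
   g(X_{r+1} - X_r) with g(u) = (u_i - b_i)(u_j - b_j), whose mean is
   (eta^2)_{ij}; as P_0 has finite support the centred summands are bounded,
   E (S_t)^4 = 3 t (t - 1) m_2^2 + t m_4 <= C t^2, and Borel-Cantelli along
   the thresholds t / (k + 1) yields the strong law of large numbers. *)

From HB Require Import structures.
From mathcomp Require Import all_boot all_order all_algebra.
From mathcomp Require Import all_classical all_reals all_analysis.
From mathcomp Require Import ring lra.
Import Order.TTheory GRing.Theory Num.Theory.
Import numFieldNormedType.Exports.
Local Open Scope classical_set_scope.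
Local Open Scope ring_scope.
Set Implicit Arguments. Unset Strict Implicit. Unset Printing Implicit Defensive.

Fixpoint words (V : Type) (D : seq V) (t : nat) : seq (seq V) :=
  if t is t'.+1 then [seq u :: dl | u <- D, dl <- words D t'] else [:: [::]].

Lemma mem_words (V : eqType) (D : seq V) t dl :
  (dl \in words D t) = (size dl == t) && all (mem D) dl.
Proof.
elim: t dl => [|t IH] [|u dl] //=; rewrite ?inE //.
  by apply/negbTE/allpairsPdep => -[? [? [_ _]]].
apply/allpairsPdep/idP => [[v [el [vD elt [-> ->]]]]|/andP[sz /andP[uD dlD]]].
  by move: elt; rewrite IH => /andP[/eqP -> ->]; rewrite eqxx vD.
by exists u, dl; rewrite IH -eqSS sz dlD.
Qed.

Lemma words_uniq (V : eqType) (D : seq V) t : uniq D -> uniq (words D t).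
Proof.
move=> uD; elim: t => [|t IH] //=.
by apply: allpairs_uniq => // -[u dl] [v el] _ _ [-> ->].
Qed.

Section IidExpectation.
Variables (R : comPzRingType) (V : Type) (D : seq V) (q : V -> R).

Definition Eiid (t : nat) (F : seq V -> R) : R :=
  \sum_(dl <- words D t) F dl * \prod_(u <- dl) q u.

Definition moment (h : V -> R) (k : nat) : R := \sum_(u <- D) q u * h u ^+ k.

Lemma Eiid0 F : Eiid 0 F = F [::].
Proof. by rewrite /Eiid big_seq1 big_nil mulr1. Qed.

Lemma EiidS t F : Eiid t.+1 F = \sum_(u <- D) q u * Eiid t (fun dl => F (u :: dl)).
Proof.
rewrite /Eiid big_allpairs_dep; apply: eq_bigr => u _.
by rewrite mulr_sumr; apply: eq_bigr => dl _; rewrite big_cons; ring.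
Qed.

Lemma eq_Eiid t F G : F =1 G -> Eiid t F = Eiid t G.
Proof. by move=> FG; apply: eq_bigr => dl _; rewrite FG. Qed.

Lemma Eiid_sum t (I : Type) (r : seq I) (F : I -> seq V -> R) :
  Eiid t (fun dl => \sum_(i <- r) F i dl) = \sum_(i <- r) Eiid t (F i).
Proof.
by rewrite /Eiid exchange_big; apply: eq_bigr => dl _; rewrite big_distrl.
Qed.

Lemma EiidZ t a F : Eiid t (fun dl => a * F dl) = a * Eiid t F.
Proof. by rewrite /Eiid mulr_sumr; apply: eq_bigr => dl _; rewrite mulrA. Qed.

Lemma Eiid1 t : \sum_(u <- D) q u = 1 -> Eiid t (fun=> 1) = 1.
Proof.
move=> q1; elim: t => [|t IH]; first by rewrite Eiid0.
rewrite EiidS (eq_bigr _ (fun u _ => congr1 _ IH)) -[RHS]q1.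
by apply: eq_bigr => u _; rewrite mulr1.
Qed.

Lemma Eiid_sum_exprS (h : V -> R) t k :
  Eiid t.+1 (fun dl => (\sum_(u <- dl) h u) ^+ k) =
  \sum_(i < k.+1) 'C(k, i)%:R * moment h (k - i) *
                  Eiid t (fun dl => (\sum_(u <- dl) h u) ^+ i).
Proof.
rewrite EiidS.
under eq_bigr => u _ do
  under eq_Eiid => dl do rewrite big_cons exprDn.
under eq_bigr => u _ do rewrite Eiid_sum mulr_sumr.
rewrite exchange_big; apply: eq_bigr => i _ /=.
under eq_bigr => u _ do
  under eq_Eiid => dl do rewrite -mulr_natl mulrA.
under eq_bigr => u _ do rewrite EiidZ mulrA mulrCA.
by rewrite -mulr_suml -mulr_sumr.
Qed.

Lemma moment1_centered (f : V -> R) : \sum_(u <- D) q u = 1 ->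
  moment (fun u => f u - \sum_(v <- D) q v * f v) 1 = 0.
Proof.
move=> q_sum1; rewrite /moment; under eq_bigr do rewrite expr1 mulrBr.
by rewrite sumrB -mulr_suml q_sum1 mul1r subrr.
Qed.

End IidExpectation.

Section CenteredMoments.
Variables (R : comPzRingType) (V : Type) (D : seq V) (q h : V -> R).
Hypotheses (q_sum1 : \sum_(u <- D) q u = 1) (h_centered : moment D q h 1 = 0).

Let moment0 : moment D q h 0 = 1.
Proof. by rewrite -q_sum1; apply: eq_bigr => u _; rewrite mulr1. Qed.

Let Eiid_sum_expr0 t : Eiid D q t (fun dl => (\sum_(u <- dl) h u) ^+ 0) = 1.
Proof. exact: Eiid1. Qed.

Lemma Eiid_sum_expr1 t : Eiid D q t (fun dl => (\sum_(u <- dl) h u) ^+ 1) = 0.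
Proof.
elim: t => [|t IH]; first by rewrite Eiid0 big_nil.
rewrite Eiid_sum_exprS !big_ord_recr big_ord0 /= subnn h_centered IH.
by rewrite !(mulr0, mul0r, add0r, addr0).
Qed.

Lemma Eiid_sum_expr2 t :
  Eiid D q t (fun dl => (\sum_(u <- dl) h u) ^+ 2) = t%:R * moment D q h 2.
Proof.
elim: t => [|t IH]; first by rewrite Eiid0 big_nil expr0n mul0r.
rewrite Eiid_sum_exprS !big_ord_recr big_ord0 /= !subSS !subn0.
rewrite !bin0 binn h_centered moment0 Eiid_sum_expr1 Eiid_sum_expr0 IH -natr1.
ring.
Qed.

Lemma Eiid_sum_expr4 t :
  Eiid D q t (fun dl => (\sum_(u <- dl) h u) ^+ 4) =
  3 * t%:R * (t%:R - 1) * moment D q h 2 ^+ 2 + t%:R * moment D q h 4.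
Proof.
elim: t => [|t IH]; first by rewrite Eiid0 big_nil expr0n /= !(mulr0, mul0r, addr0).
rewrite Eiid_sum_exprS !big_ord_recr big_ord0 /= !subSS !subn0.
rewrite !bin0 bin1 binSn binn (_ : 'C(4, 2) = 6) //.
rewrite h_centered moment0 Eiid_sum_expr1 Eiid_sum_expr0 Eiid_sum_expr2 IH -natr1.
ring.
Qed.

End CenteredMoments.

Section FourthMomentTail.
Variables (R : realFieldType) (V : Type) (D : seq V) (q h : V -> R).
Hypotheses (q_ge0 : forall u, 0 <= q u) (q_sum1 : \sum_(u <- D) q u = 1)
           (h_centered : moment D q h 1 = 0).

Lemma le_Eiid t F G : (forall dl, F dl <= G dl) -> Eiid D q t F <= Eiid D q t G.
Proof.
move=> FG; apply: ler_sum => dl _; apply: ler_wpM2r (FG dl).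
exact: prodr_ge0.
Qed.

Lemma expr4_indicator_le (a x : R) : 0 <= a -> a ^+ 4 * (a <= `|x|)%R%:R <= x ^+ 4.
Proof.
move=> a_ge0; have [ax|_] := boolP (a <= `|x|); last first.
  by rewrite mulr0 exprn_even_ge0.
rewrite mulr1 -[x ^+ 4]ger0_norm ?exprn_even_ge0 // normrX.
by apply: lerXn2r; rewrite ?nnegrE.
Qed.

Lemma Eiid_sum_tail t (a : R) : 0 <= a ->
  a ^+ 4 * Eiid D q t (fun dl => (a <= `|\sum_(u <- dl) h u|)%R%:R) <=
  (3 * moment D q h 2 ^+ 2 + moment D q h 4) * t%:R ^+ 2.
Proof.
move=> a_ge0; rewrite -EiidZ.
apply: le_trans (le_Eiid _ (fun dl => expr4_indicator_le _ a_ge0)) _.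
rewrite Eiid_sum_expr4 //.
have m2_ge0 : 0 <= moment D q h 2 ^+ 2 by rewrite exprn_even_ge0.
have m4_ge0 : 0 <= moment D q h 4.
  by apply: sumr_ge0 => u _; rewrite mulr_ge0 ?exprn_even_ge0.
have tt_ge0 : 0 <= t%:R * (t%:R - 1) :> R.
  by case: t => [|t]; rewrite ?mul0r // mulr_ge0 // subr_ge0 ler1n.
have := mulr_ge0 m2_ge0 (ler0n R t); have := mulr_ge0 m4_ge0 tt_ge0.
nra.
Qed.

End FourthMomentTail.

Lemma measure_bigsetU_seq d (T : measurableType d) (R : realType)
    (mu : {measure set T -> \bar R}) (I : choiceType) (s : seq I) (Pr : pred I)
    (F : I -> set T) :
  uniq s -> (forall i, measurable (F i)) ->
  trivIset [set i | (i \in s) && Pr i] F ->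
  mu (\big[setU/set0]_(i <- s | Pr i) F i) = (\sum_(i <- s | Pr i) mu (F i))%E.
Proof.
move=> us mF tF; rewrite -bigcup_seq_cond measure_fin_bigcup //; last first.
  by apply: sub_finite_set (finite_seq s) => i /andP[].
rewrite -[RHS]big_filter [RHS]fsbig_seq ?filter_uniq //.
by apply: eq_fsbigl; apply/seteqP; split => i; rewrite /mkset mem_filter andbC.
Qed.

Lemma borel_cantelli_ae d (T : measurableType d) (R : realType)
    (mu : {measure set T -> \bar R}) (F : (set T)^nat) :
  (forall t, measurable (F t)) -> (\sum_(t <oo) mu (F t) < +oo)%E ->
  {ae mu, forall w, \forall t \near \oo, ~ F t w}.
Proof.
move=> mF sumF; exists (lim_sup_set F); split.
- by apply: bigcapT_measurable => k; apply: bigcup_measurable => t _.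
- exact: lim_sup_set_cvg0.
- move=> w not_eventually k _; apply: contrapT => notF; apply: not_eventually.
  by exists k => // t kt Ft; apply: notF; exists t.
Qed.

Lemma sum_inv_sqS_le (R : realFieldType) N :
  \sum_(t < N) (t.+1%:R ^+ 2)^-1 <= 2 :> R.
Proof.
suff : \sum_(t < N) (t.+1%:R ^+ 2)^-1 <= 2 - 2 / N.+1%:R :> R.
  by move/le_trans; apply; rewrite lerBlDr lerDl.
elim: N => [|N IH]; first by rewrite big_ord0 divr1 subrr.
rewrite big_ord_recr /=; apply: le_trans (lerD IH (lexx _)) _.
rewrite -[N.+2%:R]natr1 -subr_ge0.
set y := N.+1%:R; have y_ge1 : 1 <= y by rewrite ler1n.
have -> : 2 - 2 / (y + 1) - (2 - 2 / y + (y ^+ 2)^-1) =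
          (y - 1) / (y ^+ 2 * (y + 1)) :> R.
  by field; apply/andP; split; apply/negP => /eqP; lra.
by rewrite divr_ge0 ?subr_ge0 // mulr_ge0 ?exprn_ge0; lra.
Qed.

Lemma nneseries_inv_sqS_lty (R : realType) (K : R) : 0 <= K ->
  (\sum_(t <oo) (K / t.+1%:R ^+ 2)%:E < +oo)%E.
Proof.
move=> K_ge0; apply: (@le_lt_trans _ _ (K * 2)%:E); last exact: ltry.
apply: lime_le.
  by apply: is_cvg_ereal_nneg_natsum => t _; rewrite lee_fin divr_ge0 ?exprn_ge0.
apply: nearW => N; rewrite sumEFin lee_fin big_mkord -mulr_sumr.
exact/ler_wpM2l/sum_inv_sqS_le.
Qed.

Lemma cvg_mean_of_deviation (R : archiRealFieldType) (s : nat -> R) (m : R) :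
  (forall k : nat, \forall t \near \oo, `|s t.+1 - t.+1%:R * m| < t.+1%:R / k.+1%:R) ->
  (fun t => s t / t%:R) @ \oo --> m.
Proof.
move=> dev; apply/cvgrPdist_lt => e e_gt0.
have [k _ /(_ k (leqnn k)) /= ke] := near_infty_natSinv_lt (PosNum e_gt0).
have [N _ devN] := dev k.
exists N.+1 => // -[//|t] /= /devN devt.
have T_gt0 : 0 < t.+1%:R :> R by [].
have -> : m - s t.+1 / t.+1%:R = - (s t.+1 - t.+1%:R * m) / t.+1%:R.
  by field; rewrite gt_eqF.
rewrite normrM normrN normfV (gtr0_norm T_gt0) ltr_pdivrMr //.
by apply: lt_le_trans devt _; rewrite mulrC ler_wpM2r ?ltW.
Qed.

Fixpoint trajectory (V : zmodType) (x0 : V) (dl : seq V) (r : nat) : V :=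
  if r is r'.+1 then trajectory x0 dl r' + nth 0 dl r' else x0.

Lemma trajectoryS (V : zmodType) (x0 : V) dl r :
  trajectory x0 dl r.+1 - trajectory x0 dl r = nth 0 dl r.
Proof. by rewrite /= addrC addKr. Qed.

Section Cylinders.
Context d (Omega : measurableType d) (V : zmodType) (X : nat -> Omega -> V) (x0 : V).

Definition increments (w : Omega) (t : nat) : seq V :=
  [seq X r.+1 w - X r w | r <- iota 0 t].

Definition cylinder (dl : seq V) : set Omega :=
  [set w | X 0 w = x0 /\ increments w (size dl) = dl].

Lemma size_increments w t : size (increments w t) = t.
Proof. by rewrite size_map size_iota. Qed.

Lemma big_increments (R : Type) (idx : R) (op : Monoid.law idx) w t (F : V -> R) :
  \big[op/idx]_(u <- increments w t) F u = \big[op/idx]_(r < t) F (X r.+1 w - X r w).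
Proof. by rewrite big_map -[in LHS](subn0 t) -/(index_iota 0 t) big_mkord. Qed.

Lemma cylinder_trajectory dl :
  cylinder dl = [set w | forall r, (r <= size dl)%N -> X r w = trajectory x0 dl r].
Proof.
apply/seteqP; split => w /=.
- move=> [X0 incr_dl]; elim=> [|r IH] r_le //=.
  rewrite -IH ?(ltnW r_le) // -incr_dl (nth_map 0%N) ?size_iota // nth_iota //.
  by rewrite addrC subrK.
- move=> Xtraj; split; first exact: (Xtraj 0%N).
  apply: (@eq_from_nth _ 0); rewrite size_increments // => r r_lt.
  by rewrite (nth_map 0%N) ?size_iota // nth_iota // !Xtraj ?(ltnW r_lt) // trajectoryS.
Qed.

Definition walk_event (D : seq V) (t : nat) (Pr : pred (seq V)) : set Omega :=
  [set w | [/\ X 0 w = x0, all (mem D) (increments w t) & Pr (increments w t)]].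

Lemma walk_event_bigsetU D t Pr :
  walk_event D t Pr = \big[setU/set0]_(dl <- words D t | Pr dl) cylinder dl.
Proof.
rewrite -bigcup_seq_cond; apply/seteqP; split => w /=.
- move=> [X0 inD Pw]; exists (increments w t).
    by rewrite /mkset mem_words size_increments eqxx inD Pw.
  by split; rewrite // size_increments.
- move=> [dl /andP[]]; rewrite mem_words => /andP[/eqP <- inD] Pdl [X0 incr].
  by rewrite /walk_event /mkset incr.
Qed.

Variables (R : realType) (P : probability Omega R) (P0 : V -> R).
Hypothesis cylinder_prob : forall dl,
  measurable (cylinder dl) /\ P (cylinder dl) = (\prod_(u <- dl) P0 u)%:E.

Lemma walk_event_prob D t Pr : uniq D ->
  measurable (walk_event D t Pr) /\
  P (walk_event D t Pr) = (Eiid D P0 t (fun dl => (Pr dl)%:R))%:E.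
Proof.
move=> uD; rewrite walk_event_bigsetU; split.
  by apply: bigsetU_measurable => dl _; case: (cylinder_prob dl).
rewrite measure_bigsetU_seq ?words_uniq //.
- rewrite (eq_bigr _ (fun dl _ => proj2 (cylinder_prob dl))) sumEFin big_mkcond.
  by congr (_%:E); apply: eq_bigr => dl _; case: (Pr dl); rewrite ?mul1r ?mul0r.
- by move=> dl; case: (cylinder_prob dl).
- move=> dl el; rewrite /mkset !mem_words.
  move=> /andP[/andP[/eqP t_dl _] _] /andP[/andP[/eqP t_el _] _].
  move=> [w [[_ dl_w] [_ el_w]]].
  by rewrite -dl_w -el_w t_dl t_el.
Qed.

Lemma ae_walk_supported D : uniq D -> \sum_(u <- D) P0 u = 1 ->
  {ae P, forall w, forall t, X 0 w = x0 /\ all (mem D) (increments w t)}.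
Proof.
move=> uD P0_sum1; apply: ae_foralln => t.
have [mW PW] := walk_event_prob t xpredT uD.
exists (~` walk_event D t xpredT); split.
- exact: measurableC.
- by apply: etrans (probability_setC P mW) _; rewrite PW Eiid1 // subee.
- by move=> w /= nW [X0 inD _]; apply: nW.
Qed.

Lemma ae_increment_sums_small D (h : V -> R) :
  uniq D -> (forall u, 0 <= P0 u) -> \sum_(u <- D) P0 u = 1 -> moment D P0 h 1 = 0 ->
  {ae P, forall w, forall k, \forall t \near \oo,
     `|\sum_(u <- increments w t.+1) h u| < t.+1%:R / k.+1%:R}.
Proof.
move=> uD P0_ge0 P0_sum1 h_centered.
pose large k t : pred (seq V) :=
  fun dl => (t.+1%:R / k.+1%:R <= `|\sum_(u <- dl) h u|)%R.
pose C := 3 * moment D P0 h 2 ^+ 2 + moment D P0 h 4.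
have C_ge0 : 0 <= C.
  apply: addr_ge0; first by rewrite mulr_ge0 ?exprn_even_ge0.
  by apply: sumr_ge0 => u _; rewrite mulr_ge0 ?exprn_even_ge0.
have large_le k t :
    (P (walk_event D t.+1 (large k t)) <= (C * k.+1%:R ^+ 4 / t.+1%:R ^+ 2)%:E)%E.
  rewrite (proj2 (walk_event_prob t.+1 (large k t) uD)) lee_fin.
  have a4_gt0 : 0 < (t.+1%:R / k.+1%:R) ^+ 4 :> R by rewrite exprn_gt0 // divr_gt0.
  rewrite -(ler_pM2l a4_gt0).
  apply: le_trans (Eiid_sum_tail P0_ge0 P0_sum1 h_centered _ (ltW (divr_gt0 _ _))) _ => //.
  rewrite [X in _ <= X](_ : _ = C * t.+1%:R ^+ 2) //.
  by field; rewrite !nat1r !pnatr_eq0.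
have rarely_large k :
    {ae P, forall w, \forall t \near \oo, ~ walk_event D t.+1 (large k t) w}.
  apply: borel_cantelli_ae => [t|].
    by case: (walk_event_prob t.+1 (large k t) uD).
  apply: le_lt_trans (nneseries_inv_sqS_lty (mulr_ge0 C_ge0 (exprn_ge0 4 (ler0n R k.+1)))).
  by apply: lee_nneseries => [t _ _|t _]; [exact: measure_ge0 | exact: large_le].
apply: filterS2 (ae_walk_supported uD P0_sum1) (ae_foralln rarely_large).
move=> w supported rare k; apply: filterS (rare k) => t not_large.
have [X0 inD] := supported t.+1.
by rewrite ltNge; apply/negP => is_large; apply: not_large.
Qed.

End Cylinders.

Section AnnealedCylinders.
Context d (Omega : measurableType d) (R : realType) (P : probability Omega R)
  (S : finType) (n : nat) (pi : S -> R) (P0 : 'rV[int]_n -> R)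
  (c : 'rV[int]_n -> S -> R) (x0 : 'rV[int]_n)
  (xi : nat -> 'rV[int]_n -> Omega -> S) (X : nat -> Omega -> 'rV[int]_n).
Hypotheses (pi_sum1 : \sum_(s : S) pi s = 1)
  (c_centered : forall u, \sum_(s : S) c u s * pi s = 0)
  (annealed : annealed_law P pi P0 c x0 xi X).

Lemma averaged_transition u : \sum_(s : S) pi s * (P0 u + c u s) = P0 u.
Proof.
under eq_bigr do rewrite mulrDr ![pi _ * _]mulrC.
by rewrite big_split /= -mulr_sumr pi_sum1 mulr1 c_centered addr0.
Qed.

Lemma averaged_path_weight (dl : seq 'rV[int]_n) :
  \sum_(f : {ffun 'I_(size dl) -> S})
     \prod_(i < size dl) (pi (f i) * (P0 (nth 0 dl i) + c (nth 0 dl i) (f i))) =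
  \prod_(u <- dl) P0 u.
Proof.
rewrite -(bigA_distr_bigA (fun (i : 'I_(size dl)) s =>
                             pi s * (P0 (nth 0 dl i) + c (nth 0 dl i) s))) /=.
by rewrite (big_nth 0) big_mkord; apply: eq_bigr => i _; rewrite averaged_transition.
Qed.

Lemma annealed_cylinder dl :
  measurable (cylinder X x0 dl) /\ P (cylinder X x0 dl) = (\prod_(u <- dl) P0 u)%:E.
Proof.
have [s0 _] : exists s0 : S, true.
  case: (pickP (fun _ : S => true)) => [s0 _|S0]; first by exists s0.
  by move: pi_sum1; rewrite big_pred0 // => /eqP; rewrite eq_sym oner_eq0.
set t := size dl; set x := trajectory x0 dl.
pose B := [seq (r, x r) | r <- iota 0 t].
have xB r : (r < t)%N -> (r, x r) \in B by move=> rt; rewrite map_f ?mem_iota.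
(* The path meets one point per time, so an environment on B is a function f of
   the time; the events E f partition the cylinder, and summing over f averages
   every transition over pi independently. *)
pose env (f : {ffun 'I_t -> S}) (p : nat * 'rV[int]_n) :=
  if insub p.1 is Some i then f i else s0.
have envE f (i : 'I_t) y : env f (i : nat, y) = f i.
  by rewrite /env /= valK.
pose E f := [set w | (forall p, p \in B -> xi p.1 p.2 w = env f p) /\
                     (forall r, (r <= t)%N -> X r w = x r)].
have E_prob f := @annealed B (env f) x t xB.
have cylE : cylinder X x0 dl = \big[setU/set0]_(f <- enum {ffun 'I_t -> S}) E f.
  rewrite cylinder_trajectory -bigcup_seq; apply/seteqP; split => w.
  - move=> Xw; exists [ffun i : 'I_t => xi i (x i) w]; first by rewrite /= mem_enum.
    split=> // p /mapP[r]; rewrite mem_iota => /andP[_ rt] ->.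
    by rewrite (envE _ (Ordinal rt)) ffunE.
  - by move=> [f _ [_ Xw]].
have E_disj : trivIset [set f | (f \in enum {ffun 'I_t -> S}) && true] E.
  move=> f g _ _ [w [[Ef _] [Eg _]]]; apply/ffunP => i.
  by rewrite -(envE f i (x i)) -(envE g i (x i)) -Ef ?xB // -Eg ?xB.
rewrite cylE; split.
  by apply: bigsetU_measurable => f _; case: (E_prob f).
rewrite measure_bigsetU_seq ?enum_uniq //; last by move=> f; case: (E_prob f).
have uB : uniq B by rewrite (map_uniq (f := fst)) // -map_comp map_id iota_uniq.
have iotaE : iota 0 t = index_iota 0 t by rewrite /index_iota subn0.
rewrite (eq_bigr _ (fun f _ => proj2 (E_prob f))) sumEFin -averaged_path_weight.
rewrite big_enum /= (eq_bigl xpredT) => [|f]; last by rewrite inE.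
congr (_%:E); apply: eq_bigr => f _.
rewrite eqxx mul1r (undup_id uB) big_map iotaE big_mkord big_split /=.
by congr (_ * _); apply: eq_bigr => i _; rewrite envE ?trajectoryS.
Qed.

End AnnealedCylinders.

Lemma sumZ_seq (R : realType) n (f : 'rV[int]_n -> R) (D : seq 'rV[int]_n) :
  uniq D -> (forall u, u \notin D -> f u = 0) -> sumZ f = \sum_(u <- D) f u.
Proof.
move=> uD f_out; rewrite /sumZ (fsbigE D) //; last by move=> u _ /f_out.
by rewrite big_mkcond; apply: eq_bigr => u _; rewrite in_setT.
Qed.

(* [sumZ f] is a finitely supported sum: it is 0 when f has infinite support. *)
Lemma sumZ_support (R : realType) n (f : 'rV[int]_n -> R) : sumZ f != 0 ->
  exists2 D : seq 'rV[int]_n, uniq D & forall u, u \notin D -> f u = 0.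
Proof.
rewrite /sumZ; case: finite_supportP => [_|D _ f_out _ _]; first by rewrite big_nil eqxx.
by exists (finmap.enum_fset D) => [|u]; [exact: finmap.fset_uniq | exact: f_out].
Qed.

Lemma Pbar_centered (R : realType) (S : finType) n (pi : S -> R)
    (P0 : 'rV[int]_n -> R) (c : 'rV[int]_n -> S -> R) :
  (forall u, \sum_(s : S) c u s * pi s = 0) -> Pbar pi P0 c =1 P0.
Proof.
by move=> c_centered u; rewrite /Pbar (eq_bigr _ (fun s _ => mulrC _ _)) c_centered addr0.
Qed.

Lemma eta2_support (R : realType) (S : finType) n (pi : S -> R)
    (P0 : 'rV[int]_n -> R) (c : 'rV[int]_n -> S -> R) (b : 'I_n -> R)
    (D : seq 'rV[int]_n) i j :
  uniq D -> (forall u, u \notin D -> P0 u = 0) ->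
  (forall u, \sum_(s : S) c u s * pi s = 0) ->
  eta2 pi P0 c b i j =
  \sum_(u <- D) P0 u * (((zcoord u i)%:~R - b i) * ((zcoord u j)%:~R - b j)).
Proof.
move=> uD P0_out c_centered; rewrite /eta2 (sumZ_seq uD) => [|u /P0_out]; last first.
  by rewrite Pbar_centered // => ->; rewrite mulr0.
by apply: eq_bigr => u _; rewrite Pbar_centered // mulrC.
Qed.

Lemma QV_increments (R : realType) n (x : nat -> 'rV[int]_n) (b : 'I_n -> R) t i j :
  QV x b t i j = \sum_(r < t) ((zcoord (x r.+1 - x r) i)%:~R - b i) *
                              ((zcoord (x r.+1 - x r) j)%:~R - b j).
Proof.
apply: eq_bigr => r _.
by rewrite /Ypath /zcoord !mxE !intrB -natr1; congr (_ * _); ring.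
Qed.

Theorem corollary3p4 (d : measure_display) (Omega : measurableType d)
  (R : realType) (P : probability Omega R) (S : finType) (n : nat)
  (pi : S -> R) (P0 : 'rV[int]_n -> R) (c : 'rV[int]_n -> S -> R)
  (bc : 'I_n -> R) (x0 : 'rV[int]_n)
  (xi : nat -> 'rV[int]_n -> Omega -> S) (X : nat -> Omega -> 'rV[int]_n) :
  (forall s, 0 <= pi s) -> \sum_(s : S) pi s = 1 ->
  (forall u, 0 <= P0 u) -> sumZ P0 = 1 ->
  (forall u s, 0 <= P0 u + c u s <= 1) ->
  (forall s, sumZ (fun u => c u s) = 0) ->
  (forall u, \sum_(s : S) c u s * pi s = 0) ->
  (exists M : nat, forall u : 'rV[int]_n,
      (exists i : 'I_n, (M < absz (zcoord u i))%N) -> P0 u = 0 /\ forall s, c u s = 0) ->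
  (forall s (i : 'I_n), sumZ (fun u => (zcoord u i)%:~R * c u s) = bc i) ->
  annealed_law P pi P0 c x0 xi X ->
  let b := fun i => b0 P0 i + bc i in
  {ae P, forall w, forall i j : 'I_n,
     (fun t : nat => QV (fun r => X r w) b t i j / t%:R) @ \oo -->
       eta2 pi P0 c b i j}.
Proof.
(* Besides the law, only the normalisations of pi and P0, the nonnegativity and
   finite support of P0 and the centring of c in s are used; the convergence
   holds for every b. *)
move=> _ pi_sum1 P0_ge0 P0_sum1 _ _ c_centered _ _ annealed b.
have [D uD P0_out] :
    exists2 D : seq 'rV[int]_n, uniq D & forall u, u \notin D -> P0 u = 0.
  by apply: sumZ_support; rewrite P0_sum1 oner_neq0.
have P0_sumD : \sum_(u <- D) P0 u = 1 by rewrite -(sumZ_seq uD P0_out).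
pose g i j (u : 'rV[int]_n) := ((zcoord u i)%:~R - b i) * ((zcoord u j)%:~R - b j).
pose h i j u := g i j u - eta2 pi P0 c b i j.
have h_centered i j : moment D P0 (h i j) 1 = 0.
  by rewrite /h (eta2_support _ _ _ uD P0_out c_centered); exact: moment1_centered.
have cylinder_prob := annealed_cylinder pi_sum1 c_centered annealed.
have small i j := ae_increment_sums_small cylinder_prob uD P0_ge0 P0_sumD (h_centered i j).
have {}small : {ae P, forall w, forall i j k, \forall t \near \oo,
    `|\sum_(u <- increments X w t.+1) h i j u| < t.+1%:R / k.+1%:R}.
  by apply: filter_forall => i; apply: filter_forall => j; exact: small.
apply: filterS small => w w_small i j.
apply: cvg_mean_of_deviation => k; apply: filterS (w_small i j k) => t.
suff -> : QV (fun r => X r w) b t.+1 i j - t.+1%:R * eta2 pi P0 c b i j =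
          \sum_(u <- increments X w t.+1) h i j u by [].
by rewrite big_increments QV_increments /h sumrB sumr_const card_ord mulr_natl.
Qed.
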